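(* Let $W$ be a finite set and $\mathtt{N}=\{N_1,\ldots,N_r\}$ a sequence of subsets of $W$ with $N_1\cup\cdots\cup N_r=W$. Put $M_i=N_i-(N_1\cup\cdots\cup N_{i-1})$, $\mathtt{M}=\{M_1,\ldots,M_r\}$, and $U=\widetilde{M}_2\cup\cdots\cup\widetilde{M}_r$. Then $$\mathbb{R}\mathcal{Z}_{K(\mathtt{M})}\cong S^{|M_1|}\times\cdots\times S^{|M_r|},\qquad\mathbb{R}\mathcal{Z}_{K(\mathtt{M})_U}\cong S^{|M_2|}\times\cdots\times S^{|M_r|}.$$
   Context: For a sequence $\mathtt{N}=\{N_1,\ldots,N_r\}$ of subsets of $W$ (repetitions allowed), choose distinct points $a_1,\ldots,a_r\notin W$, $\widetilde{N}_i=N_i\sqcup\{a_i\}$; $K(\mathtt{N})$ is the simplicial complex on $W\sqcup\{a_1,\ldots,a_r\}$ with minimal non-faces exactly $\widetilde{N}_1,\ldots,\widetilde{N}_r$. $K(\mathtt{M})$ uses the same points, $\widetilde{M}_i=M_i\sqcup\{a_i\}$. For a vertex subset $U$, $K_U=\{\sigma\in K\mid\sigma\subset U\}$ as a complex on vertex set $U$. For a simplicial complex $K$ on vertex set $V$, the real moment-angle complex is $\mathbb{R}\mathcal{Z}_K=\bigcup_{\sigma\in K}\prod_{v\in V}Y_v$ with $Y_v=CS^0$ (reduced cone on $S^0$, an interval) if $v\in\sigma$ and $Y_v=S^0$ otherwise. *)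

From HB Require Import structures.
From mathcomp Require Import all_boot all_order all_algebra.
From mathcomp Require Import all_classical all_reals.
From mathcomp Require Import topology_theory.topology normedtype.
Import numFieldNormedType.Exports.
Set Implicit Arguments. Unset Strict Implicit. Unset Printing Implicit Defensive.
Import Order.TTheory GRing.Theory Num.Theory.
Local Open Scope ring_scope.

Notation Rspace R T := ({ptws T -> R}%type) (only parsing).

Definition homeomorphic (X Y : topologicalType) (A : set X) (B : set Y) : Prop :=
  exists (f : X -> Y) (g : Y -> X),
    [/\ (forall x, A x -> B (f x)), (forall y, B y -> A (g y)),
        (forall x, A x -> g (f x) = x), (forall y, B y -> f (g y) = y) &
        ({within A, continuous f}%classic /\ {within B, continuous g}%classic)].

(* Real moment-angle complex of the simplicial complex on vertex set T whose
   faces are given by [face]: union over faces sigma of prod_v Y_v with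
   Y_v = [-1,1] (= CS^0) if v in sigma, Y_v = {-1,1} (= S^0) otherwise. *)
Definition RZ (R : realType) (T : finType) (face : pred {set T}) :
    set (Rspace R T) :=
  [set x : Rspace R T | exists sigma : {set T}, face sigma /\
     forall v : T, if v \in sigma then ((-1 <= (x v : R) <= 1) : Prop)
                   else ((x v : R) = -1 \/ (x v : R) = 1)]%classic.

(* Vertex set W ⊔ {a_1,...,a_r}: a_i is represented by inr i. *)
Definition vert (W : finType) (r : nat) := (W + 'I_r)%type.

Definition tilde (W : finType) (r : nat) (N : 'I_r -> {set W}) (i : 'I_r) :
    {set vert W r} :=
  (inl @: N i) :|: [set inr i].

(* K(N): simplicial complex on vert W r whose minimal non-faces are exactly
   the tilde N_i: faces are the subsets containing no tilde N_i. *)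
Definition KN (W : finType) (r : nat) (N : 'I_r -> {set W}) : pred {set vert W r} :=
  fun sigma => [forall i, ~~ (tilde N i \subset sigma)].

Definition full_sub (T : finType) (K : pred {set T}) (U : {set T}) :
    pred {set {v : T | v \in U}} :=
  fun tau => K [set val x | x in tau].

Definition Mseq (W : finType) (r : nat) (N : 'I_r -> {set W}) (i : 'I_r) : {set W} :=
  N i :\: \bigcup_(j : 'I_r | (j < i)%N) N j.

(* S^n = unit sphere in R^(n+1); a product of spheres S^{d_i}, i in I,
   as a subspace of R^{sum_i (d_i+1)}. *)
Definition sphere_prod (R : realType) (I : finType) (d : I -> nat) :
    set (Rspace R {i : I & 'I_(d i).+1}) :=
  [set x : Rspace R {i : I & 'I_(d i).+1} |
     forall i : I, \sum_(j < (d i).+1) (x (Tagged _ j) : R) ^+ 2 = 1]%classic.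

From HB Require Import structures.
From mathcomp Require Import all_boot all_order all_algebra.
From mathcomp Require Import all_classical all_reals.
From mathcomp Require Import topology_theory.topology normedtype realfun.
Import numFieldNormedType.Exports.
Set Implicit Arguments. Unset Strict Implicit. Unset Printing Implicit Defensive.
Import Order.TTheory GRing.Theory Num.Theory.
Local Open Scope ring_scope.

(* Since the M_i partition W, the minimal non-faces ~M_i of K(M) partition its
   vertex set, so a face is exactly a set missing some vertex of every block.
   Hence RZ_K(M) is the product over the blocks ~M_i of the boundaries of the
   cubes [-1,1]^(~M_i), and each such boundary is homeomorphic to S^|M_i| by the
   radial projection x |-> x / |x|_2, with inverse y |-> y / |y|_oo.  The full
   subcomplex on U is the complex of the same kind for the blocks ~M_i, i >= 2. *)

Section FibreComplex.
Variables (R : realType) (T I : finType) (p : T -> I).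

Definition fibre (i : I) : {set T} := [set t | p t == i].

Definition fibre_complex : pred {set T} :=
  fun sigma => [forall i, ~~ (fibre i \subset sigma)].

Definition cube_boundary_prod : set {ptws T -> R} :=
  [set x | (forall t, `|x t| <= 1) /\
           forall i, exists2 t, p t = i & `|x t| = 1]%classic.

Lemma RZ_fibre_complex :
  @RZ R T fibre_complex = cube_boundary_prod.
Proof.
apply/seteqP; split=> x /=.
  move=> [sigma [/forallP sigma_face x_sigma]]; split=> [t|i].
    by have := x_sigma t; case: (t \in sigma) => [|[]->];
      rewrite ?normrN ?normr1 ?ler_norml.
  have /subsetPn[t] := sigma_face i; rewrite inE => /eqP pt t_sigma.
  exists t => //; have := x_sigma t; rewrite (negbTE t_sigma).
  by case=> ->; rewrite ?normrN normr1.
move=> [x_cube x_bd]; exists [set t | `|x t| != 1]; split.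
  apply/forallP=> i /=; have [t pt xt] := x_bd i.
  by apply/subsetPn; exists t; rewrite /fibre !inE ?pt ?xt eqxx.
move=> t; rewrite inE; case: eqP => [/eqP|_]; last by rewrite -ler_norml x_cube.
by rewrite eqr_norml ler01 andbT => /orP[]/eqP->; [right|left].
Qed.

Lemma fibre_tagged_bijection (d : I -> nat) :
  (forall i, #|fibre i| = (d i).+1) ->
  exists (h : T -> {i : I & 'I_(d i).+1}) (h' : {i : I & 'I_(d i).+1} -> T),
    [/\ cancel h h', cancel h' h & forall t, tag (h t) = p t].
Proof.
move=> card_fibre.
have fibre_p t : t \in fibre (p t) by rewrite inE.
pose h' (s : {i : I & 'I_(d i).+1}) : T :=
  enum_val (cast_ord (esym (card_fibre (tag s))) (tagged s)).
pose h (t : T) : {i : I & 'I_(d i).+1} :=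
  Tagged _ (cast_ord (card_fibre (p t)) (enum_rank_in (fibre_p t) t)).
have hK : cancel h h' by move=> t; rewrite /h' /h /= cast_ordK enum_rankK_in.
have ph' s : p (h' s) = tag s.
  apply/eqP; have := enum_valP (cast_ord (esym (card_fibre (tag s))) (tagged s)).
  by rewrite inE.
have h'_inj : injective h'.
  move=> [i j] [i' j'] eq_h'.
  have eq_i : i = i' by have := ph' (Tagged _ j); rewrite eq_h' ph'.
  by subst i'; move: eq_h'; rewrite /h' /= => /enum_val_inj/cast_ord_inj ->.
by exists h, h'; split=> // s; apply: h'_inj; rewrite hK.
Qed.

End FibreComplex.

Lemma sum_tagged (R : realType) (I : finType) (d : I -> nat)
    (F : {i : I & 'I_(d i).+1} -> R) (i : I) :
  \sum_(j < (d i).+1) F (Tagged _ j) = \sum_(s | tag s == i) F s.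
Proof.
have := @sig_big_dep R 0 +%R I (fun k => 'I_(d k).+1) (pred1 i) (fun _ _ => true)
  (fun k (j : 'I_(d k).+1) => F (Tagged _ j)).
rewrite big_pred1_eq => ->.
by apply: eq_big => [[k j]|[k j] _] //=; rewrite andbT.
Qed.

Lemma sphere_prodP (R : realType) (I : finType) (d : I -> nat)
    (y : {ptws {i : I & 'I_(d i).+1} -> R}) :
  @sphere_prod R I d y <-> forall i, \sum_(s | tag s == i) y s ^+ 2 = 1.
Proof.
by split=> y_sph i; have := y_sph i; rewrite (sum_tagged (fun s => y s ^+ 2)).
Qed.

Section PointwiseContinuity.
Variables (R : realType) (T : finType).

Lemma continuous_coord (t : T) : continuous (fun x : {ptws T -> R} => x t).
Proof. exact: (@proj_continuous T (fun _ => R) t). Qed.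

Lemma continuous_ptws (X : topologicalType) (f : X -> {ptws T -> R}) x :
  (forall t, {for x, continuous (fun z => f z t)}) -> {for x, continuous f}.
Proof.
exact: (@pointwise_cvgP (discrete_topology T) R (f @ x)%classic (f x) _).2.
Qed.

End PointwiseContinuity.

Section RadialProjection.
Variables (R : realType) (T I : finType) (d : I -> nat) (p : T -> I).
Local Notation S := {i : I & 'I_(d i).+1}.
Local Notation cube := (@cube_boundary_prod R T I p).
Local Notation sphere := (@sphere_prod R I d).
Variables (h : T -> S) (h' : S -> T).
Hypotheses (hK : cancel h h') (h'K : cancel h' h).
Hypothesis tag_h : forall t, tag (h t) = p t.

Definition fibre_norm2 (x : T -> R) (i : I) : R :=
  Num.sqrt (\sum_(t | p t == i) x t ^+ 2).

Definition tag_normoo (y : S -> R) (i : I) : R :=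
  \big[Num.max/0]_(s | tag s == i) `|y s|.

Definition to_sphere (x : {ptws T -> R}) : {ptws S -> R} :=
  fun s => x (h' s) / fibre_norm2 x (tag s).

Definition to_cube (y : {ptws S -> R}) : {ptws T -> R} :=
  fun t => y (h t) / tag_normoo y (p t).

Lemma p_h' s : p (h' s) = tag s.
Proof. by rewrite -tag_h h'K. Qed.

Lemma sum_fibre_tag (F : T -> R) i :
  \sum_(t | p t == i) F t = \sum_(s | tag s == i) F (h' s).
Proof.
rewrite (reindex h'); last exact: onW_bij (Bijective h'K hK).
by apply: eq_bigl => s; rewrite p_h'.
Qed.

Lemma fibre_norm2_ge1 x i : cube x -> 1 <= fibre_norm2 x i.
Proof.
move=> [_ /(_ i)[t pt xt]].
have sum_sqr_ge0 (P : pred T) : 0 <= \sum_(t | P t) x t ^+ 2.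
  by apply: sumr_ge0 => s _; exact: sqr_ge0.
rewrite -sqrtr1 ler_sqrt ?ler01 ?sum_sqr_ge0 // (bigD1 t) ?pt //=.
by rewrite -[1]addr0 lerD ?sum_sqr_ge0 // -real_normK ?num_real // xt expr1n.
Qed.

Lemma fibre_norm2_gt0 x i : cube x -> 0 < fibre_norm2 x i.
Proof. by move/(fibre_norm2_ge1 i); apply: lt_le_trans. Qed.

Lemma tag_normoo_ge y s : `|y s| <= tag_normoo y (tag s).
Proof. exact: le_bigmax_cond. Qed.

Lemma tag_normoo_attained y i : exists2 s, tag s = i & tag_normoo y i = `|y s|.
Proof.
have [s /eqP s_i normooE] :=
  @eq_bigmax _ _ S 0 (Tagged (fun k => 'I_(d k).+1) ord0) (fun s => tag s == i)
    (fun s => `|y s|) (eqxx i) (fun s _ => normr_ge0 (y s)).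
by exists s.
Qed.

Lemma tag_normoo_gt0 y i : sphere y -> 0 < tag_normoo y i.
Proof.
move=> /sphere_prodP /(_ i) sum1; rewrite ltNge; apply/negP => normoo_le0.
have y_fibre0 s : tag s == i -> y s ^+ 2 = 0.
  move=> /eqP s_i; have : `|y s| <= 0.
    by rewrite (le_trans (tag_normoo_ge y s)) ?s_i.
  by rewrite normr_le0 => /eqP ->; rewrite expr0n.
by move: sum1; rewrite big1 // => /esym/eqP; rewrite oner_eq0.
Qed.

Lemma to_sphere_mem x : cube x -> sphere (to_sphere x).
Proof.
move=> x_cube; apply/sphere_prodP => i.
rewrite /to_sphere; under eq_bigr => s /eqP -> do rewrite expr_div_n.
rewrite -mulr_suml -(sum_fibre_tag (fun t => x t ^+ 2)) /fibre_norm2.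
rewrite sqr_sqrtr ?divff //.
  by rewrite gt_eqF // -sqrtr_gt0 fibre_norm2_gt0.
by rewrite sumr_ge0 // => t _; rewrite sqr_ge0.
Qed.

Lemma to_cube_mem y : sphere y -> cube (to_cube y).
Proof.
move=> y_sph; have normoo_gt0 i := tag_normoo_gt0 i y_sph.
split=> [t|i].
  rewrite /to_cube normrM normfV (gtr0_norm (normoo_gt0 _)).
  by rewrite ler_pdivrMr // mul1r -tag_h tag_normoo_ge.
have [s s_i normooE] := tag_normoo_attained y i.
exists (h' s); first by rewrite p_h'.
rewrite /to_cube h'K p_h' s_i normrM normfV (gtr0_norm (normoo_gt0 _)).
by rewrite normooE divff // -normooE gt_eqF.
Qed.

Lemma tag_normoo_to_sphere x i :
  cube x -> tag_normoo (to_sphere x) i = (fibre_norm2 x i)^-1.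
Proof.
move=> x_cube; have [x_le1 /(_ i)[t pt xt]] := x_cube.
have n_gt0 := fibre_norm2_gt0 i x_cube.
apply/le_anti/andP; split.
  apply: bigmax_le => [|s /eqP s_i]; first by rewrite invr_ge0 ltW.
  rewrite /to_sphere s_i normrM normfV (gtr0_norm n_gt0).
  by rewrite -[leRHS]mul1r ler_wpM2r ?x_le1 // invr_ge0 ltW.
apply: (bigmax_sup (h t)); first by rewrite tag_h pt.
by rewrite /to_sphere hK tag_h pt normrM xt mul1r normfV (gtr0_norm n_gt0).
Qed.

Lemma to_sphereK x : cube x -> to_cube (to_sphere x) = x.
Proof.
move=> x_cube; apply/funext => t.
rewrite /to_cube tag_normoo_to_sphere // invrK /to_sphere hK tag_h divfK //.
by rewrite gt_eqF ?fibre_norm2_gt0.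
Qed.

Lemma fibre_norm2_to_cube y i :
  sphere y -> fibre_norm2 (to_cube y) i = (tag_normoo y i)^-1.
Proof.
move=> y_sph; have normoo_gt0 := tag_normoo_gt0 i y_sph.
rewrite /fibre_norm2 (sum_fibre_tag (fun t => to_cube y t ^+ 2)).
under eq_bigr => s /eqP s_i do rewrite /to_cube h'K p_h' s_i expr_div_n.
rewrite -mulr_suml (sphere_prodP y).1 // mul1r -exprVn sqrtr_sqr.
by rewrite gtr0_norm // invr_gt0.
Qed.

Lemma to_cubeK y : sphere y -> to_sphere (to_cube y) = y.
Proof.
move=> y_sph; apply/funext => s.
rewrite /to_sphere fibre_norm2_to_cube // invrK /to_cube h'K p_h' divfK //.
by rewrite gt_eqF ?tag_normoo_gt0.
Qed.

Lemma continuous_fibre_norm2 i :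
  continuous (fun x : {ptws T -> R} => fibre_norm2 x i).
Proof.
move=> x; apply: continuous_comp; last exact: sqrt_continuous.
apply: (continuous_big add_continuous) => t _ z.
have -> : (fun x : {ptws T -> R} => x t ^+ 2) = (fun x => x t * x t).
  by apply/funext => y; rewrite expr2.
by apply: continuousM; apply: continuous_coord.
Qed.

Lemma continuous_tag_normoo i :
  continuous (fun y : {ptws S -> R} => tag_normoo y i).
Proof.
apply: (continuous_big max_continuous) => s _ y.
exact: (@continuous_comp _ _ _ (fun z : {ptws S -> R} => z s) Num.norm y
  (@continuous_coord R S s y) (@norm_continuous R R^o _)).
Qed.

Lemma cube_boundary_prod_homeomorphic : homeomorphic cube sphere.
Proof.
exists to_sphere, to_cube; split.
- exact: to_sphere_mem.
- exact: to_cube_mem.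
- exact: to_sphereK.
- exact: to_cubeK.
split; apply: continuous_in_subspaceT.
  move=> x; rewrite inE => x_cube; apply: continuous_ptws => s.
  apply: continuousM; first exact: continuous_coord.
  apply: continuousV; last exact: continuous_fibre_norm2.
  by rewrite gt_eqF ?fibre_norm2_gt0.
move=> y; rewrite inE => y_sph; apply: continuous_ptws => t.
apply: continuousM; first exact: continuous_coord.
apply: continuousV; last exact: continuous_tag_normoo.
by rewrite gt_eqF ?tag_normoo_gt0.
Qed.

End RadialProjection.

Lemma RZ_fibre_complex_homeomorphic (R : realType) (T I : finType) (p : T -> I)
    (d : I -> nat) :
  (forall i, #|fibre p i| = (d i).+1) ->
  homeomorphic (@RZ R T (fibre_complex p)) (@sphere_prod R I d).
Proof.
move=> /fibre_tagged_bijection[h [h' [hK h'K tag_h]]].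
rewrite RZ_fibre_complex; exact: cube_boundary_prod_homeomorphic hK h'K tag_h.
Qed.

Section FibresOver.
Variables (T I : finType) (p : T -> I) (J : pred I).

Definition fibres_over : {set T} := [set t | J (p t)].

Lemma fibres_overP (t : {t | t \in fibres_over}) : J (p (val t)).
Proof. by have := valP t; rewrite inE. Qed.

Definition restrict_label (t : {t | t \in fibres_over}) : {i | J i} :=
  exist _ (p (val t)) (fibres_overP t).

Lemma fibre_restrict_label i : val @: fibre restrict_label i = fibre p (val i).
Proof.
apply/setP => t; rewrite inE; apply/imsetP/eqP => [[u]|pt].
  by rewrite inE => /eqP <- ->.
have t_over : t \in fibres_over by rewrite inE pt (valP i).
by exists (exist _ t t_over); rewrite // inE; apply/eqP/val_inj.
Qed.

Lemma card_fibre_restrict_label i :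
  #|fibre restrict_label i| = #|fibre p (val i)|.
Proof. by rewrite -fibre_restrict_label card_imset //; exact: val_inj. Qed.

Lemma full_sub_fibre_complex :
  (forall i, exists t, p t = i) ->
  @full_sub T (fibre_complex p) fibres_over = fibre_complex restrict_label.
Proof.
move=> p_surj; apply/funext => tau; rewrite /full_sub /fibre_complex.
apply/forallP/forallP => tau_face i.
  apply: contra (tau_face (val i)) => sub_tau.
  by rewrite -fibre_restrict_label; exact: imsetS.
case: (boolP (J i)) => [Ji | not_Ji].
  apply: contra (tau_face (exist _ i Ji)) => /fintype.subsetP sub_tau.
  apply/fintype.subsetP => t t_i; have /sub_tau : val t \in fibre p i.
    by rewrite -[i]/(val (exist J i Ji)) -fibre_restrict_label imset_f.
  by case/imsetP => u u_tau /val_inj ->.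
have [t pt] := p_surj i; apply/subsetPn; exists t; first by rewrite inE pt.
apply/imsetP => -[u _ t_u]; move: not_Ji; rewrite -pt t_u.
by rewrite fibres_overP.
Qed.

End FibresOver.

Section TildeComplex.
Variables (W : finType) (r : nat).

Lemma Mseq_cover (N : 'I_r -> {set W}) :
  \bigcup_i N i = [set: W] -> forall w, exists i, w \in Mseq N i.
Proof.
move=> cover w; have : w \in \bigcup_i N i by rewrite cover inE.
case/bigcupP => i _ w_i.
have [j w_j j_min] := @arg_minnP _ i (fun j => w \in N j) val w_i.
exists j; rewrite inE w_j andbT; apply/bigcupP => -[k k_lt_j w_k].
by have := j_min k w_k; rewrite leqNgt k_lt_j.
Qed.

Lemma Mseq_uniq (N : 'I_r -> {set W}) w i j :
  w \in Mseq N i -> w \in Mseq N j -> i = j.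
Proof.
wlog lt_ij : i j / (i < j)%N => [wlog_lt | w_i].
  by case: (ltngtP i j) => [lt_ij | lt_ji | /val_inj //] w_i w_j;
    [exact: wlog_lt | apply/esym; exact: wlog_lt w_j w_i].
rewrite inE => /andP[/bigcupP not_below _]; exfalso; apply: not_below.
by exists i => //; move: w_i; rewrite inE => /andP[].
Qed.

Lemma card_tilde (M : 'I_r -> {set W}) i :
  #|tilde M i| = #|M i|.+1.
Proof.
rewrite /tilde finset.setUC cardsU1 card_imset; last exact: inl_inj.
by case: imsetP => [[]|].
Qed.

Definition vert_label (l : W -> 'I_r) (v : vert W r) : 'I_r :=
  match v with inl w => l w | inr i => i end.

Variables (M : 'I_r -> {set W}) (l : W -> 'I_r).
Hypothesis M_l : forall w i, (w \in M i) = (l w == i).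

Lemma fibre_vert_label i : fibre (vert_label l) i = tilde M i.
Proof.
apply/setP => -[w | j]; rewrite !inE /=.
  by rewrite (mem_imset _ _ (@inl_inj _ _)) M_l orbF.
by case: imsetP => [[]|].
Qed.

Lemma KN_fibre_complex : KN M = fibre_complex (vert_label l).
Proof.
by apply/funext => sigma; apply: eq_forallb => i; rewrite fibre_vert_label.
Qed.

End TildeComplex.

Theorem proposition4p4 (R : realType) (W : finType) (r : nat)
    (N : 'I_r -> {set W}) :
  \bigcup_(i : 'I_r) N i = [set: W] ->
  let M := Mseq N in
  let U := \bigcup_(i : 'I_r | (0 < i)%N) tilde M i in
  homeomorphic (@RZ R _ (KN M)) (@sphere_prod R _ (fun i : 'I_r => #|M i|)) /\
  homeomorphic (@RZ R _ (@full_sub _ (KN M) U))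
    (@sphere_prod R _ (fun i : {i : 'I_r | (0 < i)%N} => #|M (val i)|)).
Proof.
move=> cover M U.
have [l M_l] : exists l : W -> 'I_r, forall w i, (w \in M i) = (l w == i).
  have [l l_M] := fin_all_exists (Mseq_cover cover).
  by exists l => w i; apply/idP/eqP => [/(Mseq_uniq (l_M w)) | <-].
have fibreE := fibre_vert_label M_l.
have card_fibre i : #|fibre (vert_label l) i| = #|M i|.+1.
  by rewrite fibreE card_tilde.
have -> : U = fibres_over (vert_label l) (fun i => (0 < i)%N).
  apply/setP => v; rewrite inE; apply/bigcupP/idP => [[i i_pos] | v_pos].
    by rewrite -fibreE inE => /eqP ->.
  by exists (vert_label l v) => //; rewrite -fibreE inE.
rewrite (KN_fibre_complex M_l) full_sub_fibre_complex => [|i]; last first.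
  by exists (inr i).
split; apply: RZ_fibre_complex_homeomorphic => i.
  exact: card_fibre.
by rewrite card_fibre_restrict_label card_fibre.
Qed.
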